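(* Let $\mathcal{A}$ be a two-dimensional pVASS and $S$ a BSCC of $\mathscr{C}_\mathcal{A}$ with $t_S(2)<0$. Let $G\in[0,1]^{S\times S}$ be the matrix where $G[q,r]$ is the probability that a run of $\mathcal{A}_2$ starting in $q(1)$ visits $r(0)$ before visiting any configuration $r'(0)$ with $r'\ne r$. Then the directed graph of $G$ (edge $q\to r$ iff $G[q,r]>0$) has exactly one bottom strongly connected component.
   Context: A pVASS of dimension $d$ is $\mathcal{A}=(Q,\gamma,W)$ ($Q$ finite, rules $\gamma\subseteq Q\times\{-1,0,1\}^d\times Q$, weights $W:\gamma\to\mathbb{N}^+$), with the standing assumption that the graph on $Q$ induced by rules is weakly connected and between two states there is at most one rule. Configurations $p\vec v\in Q\times\mathbb{N}^d$; a rule $(p,\kappa,q)$ is enabled if $\vec v_i>0$ whenever $\kappa_i=-1$; the Markov chain on configurations has a self-loop with probability 1 if no rule is enabled, and otherwise each enabled rule of weight $\ell$ gives $p\vec v\to q(\vec v+\kappa)$ with probability $\ell/T$, $T$ total enabled weight. $\mathscr{C}_\mathcal{A}$: finite Markov chain on $Q$ with $p\to q$ with probability $W((p,\kappa,q))/T_p$ ($T_p$ total weight of rules from $p$); BSCC = bottom strongly connected component; for a BSCC $S$, $\mu_S$ is its invariant distribution and the trend is $t_S=\sum_{s\in S}\mu_S(s)\sum_{(s,\kappa,t)\in\gamma}\kappa W((s,\kappa,t))/T_s$. $\mathcal{A}_2$ is the one-dimensional pVASS with a rule $(s,\kappa(2),t)$ of weight $\ell$ for each rule $(s,\kappa,t)$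 of weight $\ell$ of $\mathcal{A}$ (configurations $q(k)$, $k\in\mathbb{N}$). (Because $t_S(2)<0$, $G$ is stochastic.) *)

From Stdlib Require Import Reals Relations.
From mathcomp Require Import all_boot.

Set Implicit Arguments.
Unset Strict Implicit.
Unset Printing Implicit Defensive.

Inductive upd := Dm | D0 | Dp.

Definition upd_val (u : upd) : Z :=
  match u with Dm => (-1)%Z | D0 => 0%Z | Dp => 1%Z end.

(* Since between two
   states there is at most one rule, the rule set is a partial function
   Q -> Q -> option (kappa, weight), kappa in {-1,0,1}^2, weight in N^+. *)
Record pVASS2 (Q : finType) := PVASS2 {
  rule : Q -> Q -> option ((upd * upd) * nat);
  weight_pos : forall p q k w, rule p q = Some (k, w) -> (0 < w)%N;
  weakly_connected : forall p q : Q,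
    connect (fun x y => isSome (rule x y) || isSome (rule y x)) p q
}.

Section Defs.
Local Open Scope R_scope.
Variables (Q : finType) (A : pVASS2 Q).

Definition rsum (F : Q -> R) : R :=
  foldr (fun t acc => Rplus (F t) acc) R0 (enum Q).

Definition W (p q : Q) : nat :=
  match rule A p q with Some (_, w) => w | None => 0%N end.

Definition kappa2 (p q : Q) : Z :=
  match rule A p q with Some ((_, u), _) => upd_val u | None => 0%Z end.

Definition Tot (p : Q) : nat := \sum_(t : Q) W p t.

Definition PC (p q : Q) : R :=
  if Tot p == 0%N then (if p == q then R1 else R0)
  else (INR (W p q) / INR (Tot p)).

Definition edgeC (p q : Q) : bool := isSome (rule A p q).

Definition is_bscc (V : {set Q}) (E : Q -> Q -> Prop) (B : {set Q}) : Prop :=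
  [/\ B != set0, B \subset V,
      (forall p q, p \in B -> q \in B -> clos_refl_trans Q E p q) &
      (forall p q, p \in B -> E p q -> q \in B)].

Definition bscc_C (S : {set Q}) : Prop :=
  is_bscc [set: Q] (fun p q => edgeC p q) S.

Definition invariant_dist (S : {set Q}) (mu : Q -> R) : Prop :=
  [/\ (forall q, 0 <= mu q),
      (forall q, q \notin S -> mu q = R0),
      rsum mu = R1 &
      (forall q, mu q = rsum (fun p => mu p * PC p q))].

Definition trend2 (mu : Q -> R) : R :=
  rsum (fun s => mu s * rsum (fun t => IZR (kappa2 s t) * PC s t)).

Definition enabled2 (s t : Q) (k : nat) : bool :=
  match rule A s t with
  | Some ((_, u), _) => (0 < k)%N || (if u is Dm then false else true)
  | None => false
  end.

Definition Ten2 (s : Q) (k : nat) : nat :=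
  \sum_(t : Q) (if enabled2 s t k then W s t else 0%N).

Definition next2 (s t : Q) (k : nat) : nat :=
  match rule A s t with
  | Some ((_, Dm), _) => k.-1
  | Some ((_, Dp), _) => k.+1
  | _ => k
  end.

(* hit_n r n p k = probability that the run of A_2 from p(k) visits, within
   n steps, a configuration with counter 0, and the first such configuration
   is r(0). *)
Fixpoint hit_n (r : Q) (n : nat) (p : Q) (k : nat) : R :=
  if k == 0%N then (if p == r then R1 else R0) else
  match n with
  | 0 => R0
  | n'.+1 =>
      if Ten2 p k == 0%N then hit_n r n' p k      (* self-loop *)
      else rsum (fun t =>
             if enabled2 p t k
             then (INR (W p t) / INR (Ten2 p k) * hit_n r n' t (next2 p t k))
             else R0)
  end.

(* The set of values {hit_n r n q 1 | n}; these are probabilities (<= 1),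
   the Rmin only serves to make boundedness trivial. *)
Definition hit_set (q r : Q) : R -> Prop :=
  fun x => exists n, x = Rmin 1 (hit_n r n q 1).

Lemma hit_set_bound q r : bound (hit_set q r).
Proof. exists R1; intros x [n ->]; apply Rmin_l. Qed.

Lemma hit_set_ne q r : exists x, hit_set q r x.
Proof. exists (Rmin 1 (hit_n r 0 q 1)); exists 0%N; reflexivity. Qed.

(* G[q,r] = probability that a run of A_2 from q(1) visits r(0) before any
   r'(0) with r' <> r  ( = sup_n of the nondecreasing n-step probabilities ). *)
Definition G (q r : Q) : R :=
  proj1_sig (completeness (hit_set q r) (hit_set_bound q r) (hit_set_ne q r)).

Definition edgeG (S : {set Q}) (q r : Q) : Prop :=
  q \in S /\ r \in S /\ (G q r > 0).

End Defs.

From HB Require Import structures.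
From Stdlib Require Import Reals Relations Lra Lia ZArith.
From Stdlib Require Import Classical IndefiniteDescription ClassicalDescription.
From mathcomp Require Import all_boot zify.

Set Implicit Arguments.
Unset Strict Implicit.
Unset Printing Implicit Defensive.

(* Fix a state c of S.  Since t_S(2) < 0, some cycle of C_A through c has
   negative effect on the second counter: otherwise the minimal effects of
   walks from c form a potential phi with phi t <= phi s + kappa2 s t on every
   edge, and averaging phi t - phi s against the invariant distribution gives
   t_S(2) >= 0.  Going around this cycle from c(M), M large, lowers the
   counter by a fixed d without reaching 0, so the state r in which the run
   from c(M) first reaches counter 0 is also reached first from every
   c(M + d i).  Every q in S reaches c with such a counter value, so some run
   from q(k) first reaches counter 0 in r.  Cutting that run at its first
   visits of the levels k-1, ..., 1 gives a path from q to r in the graph of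
   G, since G is invariant under shifting the counter.  Hence r is reachable
   from every vertex, and the vertices reachable from r form the unique BSCC. *)

Lemma Rplus_associative : associative Rplus.
Proof. by move=> x y z; rewrite Rplus_assoc. Qed.

HB.instance Definition _ :=
  Monoid.isComLaw.Build R R0 Rplus Rplus_associative Rplus_comm Rplus_0_l.
HB.instance Definition _ := Monoid.isMulLaw.Build R R0 Rmult Rmult_0_l Rmult_0_r.
HB.instance Definition _ :=
  Monoid.isAddLaw.Build R Rmult Rplus Rmult_plus_distr_r Rmult_plus_distr_l.

Section RealSums.
Local Open Scope R_scope.
Variable Q : finType.
Implicit Types F G : Q -> R.

Lemma rsumE F : rsum F = \big[Rplus/0]_(t : Q) F t.
Proof. by rewrite /rsum -big_enum /= unlock. Qed.

Lemma eq_rsum F G : (forall t, F t = G t) -> rsum F = rsum G.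
Proof. by move=> FG; rewrite !rsumE; apply: eq_bigr => t _. Qed.

Lemma rsumD F G : rsum (fun t => F t + G t) = rsum F + rsum G.
Proof. by rewrite !rsumE big_split. Qed.

Lemma rsumZ c F : rsum (fun t => c * F t) = c * rsum F.
Proof. by rewrite !rsumE big_distrr. Qed.

Lemma rsum_exchange (F : Q -> Q -> R) :
  rsum (fun s => rsum (F s)) = rsum (fun t => rsum (F^~ t)).
Proof.
rewrite rsumE (eq_bigr _ (fun s _ => rsumE (F s))) exchange_big.
by rewrite rsumE; apply: eq_bigr => t _; rewrite rsumE.
Qed.

Lemma rsum_le F G : (forall t, F t <= G t) -> rsum F <= rsum G.
Proof.
move=> FG; rewrite !rsumE.
by apply: (big_ind2 (fun x y => x <= y)) => [|x1 x2 y1 y2|t _]; [lra|lra|].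
Qed.

Lemma rsum_ge0 F : (forall t, 0 <= F t) -> 0 <= rsum F.
Proof. by move=> F0; rewrite rsumE; apply: big_ind => [|x y|t _]; [lra|lra|]. Qed.

Lemma rsum_gt0 F t0 : (forall t, 0 <= F t) -> 0 < F t0 -> 0 < rsum F.
Proof.
move=> F0 Ft0; rewrite rsumE (bigD1 t0) //=.
have : 0 <= \big[Rplus/0]_(t | t != t0) F t.
  by apply: big_ind => [|x y|t _]; [lra|lra|].
lra.
Qed.

Lemma INR_sum (F : Q -> nat) : INR (\sum_t F t) = \big[Rplus/0]_t INR (F t).
Proof. exact: (big_morph INR plus_INR). Qed.

End RealSums.

Lemma clos_refl_trans_path (T : Type) (e : rel T) p q :
  clos_refl_trans T (fun x y => e x y) p q -> exists2 l, path e p l & last p l = q.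
Proof.
elim=> [x y exy | x | x y z _ [l1 pl1 <-] _ [l2 pl2 <-]].
- by exists [:: y]; rewrite /= ?exy.
- by exists [::].
- by exists (l1 ++ l2); rewrite ?cat_path ?last_cat ?pl1.
Qed.

Lemma clos_refl_trans_closed (T : Type) (E : T -> T -> Prop) (P : T -> Prop) a b :
  (forall p q, P p -> E p q -> P q) -> clos_refl_trans T E a b -> P a -> P b.
Proof. by move=> PE; elim=> [x y /PE | | x y z _ IHxy _ IHyz /IHxy] //; apply. Qed.

Section CounterWalks.
Variables (Q : finType) (A : pVASS2 Q).
Implicit Types (p q r s t : Q) (l : seq Q).

Fixpoint walk_effect p l : Z :=
  if l is t :: l' then (kappa2 A p t + walk_effect t l')%Z else 0%Z.

Lemma kappa2_bounds p t : (-1 <= kappa2 A p t <= 1)%Z.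
Proof. by rewrite /kappa2; case: (rule A p t) => [[[? []] ?]|] /=; lia. Qed.

Lemma next2_Z p t k :
  (0 < k)%N -> Z.of_nat (next2 A p t k) = (Z.of_nat k + kappa2 A p t)%Z.
Proof.
rewrite /next2 /kappa2; case: (rule A p t) => [[[? []] ?]|] /=; lia.
Qed.

Lemma next2_addn p t k m : (0 < k)%N -> next2 A p t (k + m) = (next2 A p t k + m)%N.
Proof. by rewrite /next2; case: (rule A p t) => [[[? []] ?]|] //; case: k. Qed.

Lemma walk_effect_cat p l1 l2 :
  walk_effect p (l1 ++ l2) = (walk_effect p l1 + walk_effect (last p l1) l2)%Z.
Proof. by elim: l1 p => [|t l IH] p /=; rewrite ?IH; lia. Qed.

Lemma walk_effect_le_size p l : (walk_effect p l <= Z.of_nat (size l))%Z.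
Proof.
elim: l p => [|t l IH] p /=; first lia.
have := IH t; have := kappa2_bounds p t; lia.
Qed.

(* [first_hit j p k r]: some run of A_2 from p(k) reaches counter value j,
   and does so for the first time in state r. *)
Inductive first_hit (j : nat) : Q -> nat -> Q -> Prop :=
| first_hit_here r : first_hit j r j r
| first_hit_step p k t r : (j < k)%N -> edgeC A p t ->
    first_hit j t (next2 A p t k) r -> first_hit j p k r.

Lemma first_hit_at_level j p k r : first_hit j p k r -> k = j -> r = p.
Proof. by case=> // p' k' t r' jk _ _ kj; lia. Qed.

Lemma first_hit_closed (S : {set Q}) j p k r :
  (forall p q, p \in S -> edgeC A p q -> q \in S) ->
  first_hit j p k r -> p \in S -> r \in S.
Proof. by move=> Scl; elim=> // p' k' t r' _ e _ IH /Scl /(_ e). Qed.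

Lemma first_hit_subn j m p k r : first_hit (j + m) p (k + m) r -> first_hit j p k r.
Proof.
move Ejm: (j + m)%N => J; move Ekm: (k + m)%N => K H.
elim: H k Ekm => [r' | p' k' t r' jk e _ IH] k Ekm.
- have -> : k = j by lia.
  exact: first_hit_here.
- apply: (first_hit_step (t := t)) => //; first lia.
  by apply: IH; rewrite -Ekm next2_addn //; lia.
Qed.

Lemma first_hit_split j m p k r : first_hit j p k r -> (j <= m <= k)%N ->
  exists2 s, first_hit m p k s & first_hit j s m r.
Proof.
elim=> [r' | p' k' t r' jk e Ht IH] mk.
- have -> : m = j by lia.
  by exists r'; exact: first_hit_here.
- case: (ltnP m k') => mk'.
  + have [|s H1 H2] := IH.
      by have := next2_Z p' t (k := k'); have := kappa2_bounds p' t; lia.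
    by exists s => //; exact: first_hit_step mk' e H1.
  + have -> : m = k' by lia.
    exists p'; first exact: first_hit_here.
    exact: first_hit_step jk e Ht.
Qed.

Lemma first_hit_walk l p k k' r : path (edgeC A) p l -> (size l < k)%N ->
  Z.of_nat k' = (Z.of_nat k + walk_effect p l)%Z ->
  first_hit 0 (last p l) k' r -> first_hit 0 p k r.
Proof.
elim: l p k => [|t l IH] p k /=.
- by move=> _ _ Ek; have -> : k = k' by lia.
- move=> /andP [e pl] lk Ek H; apply: (first_hit_step (t := t)) => //; first lia.
  have := next2_Z p t (k := k); have := kappa2_bounds p t.
  by move=> *; apply: (IH _ _ pl) H; lia.
Qed.

Lemma first_hit_or_walk l p k : path (edgeC A) p l -> (0 < k)%N ->
  (exists r, first_hit 0 p k r) \/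
  exists2 k', Z.of_nat k' = (Z.of_nat k + walk_effect p l)%Z &
    forall r, first_hit 0 (last p l) k' r -> first_hit 0 p k r.
Proof.
elim: l p k => [|t l IH] p k /=.
- by move=> _ _; right; exists k => //; lia.
- move=> /andP [e pl] kp.
  have Ek := next2_Z p t kp.
  case: (posnP (next2 A p t k)) => [E0 | nk].
    left; exists t; apply: (first_hit_step (t := t)) => //.
    by rewrite E0; exact: first_hit_here.
  case: (IH t _ pl nk) => [[r H] | [k' Ek' lift]].
    by left; exists r; exact: (first_hit_step (t := t)).
  right; exists k'; first lia.
  by move=> r /lift; exact: (first_hit_step (t := t)).
Qed.

Section NegativeCycle.
Variables (c : Q) (C : seq Q).
Hypotheses (pathC : path (edgeC A) c C) (lastC : last c C = c).
Hypothesis negC : (walk_effect c C < 0)%Z.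

Lemma first_hit_exists_of_cycle k : exists r, first_hit 0 c k r.
Proof.
elim/ltn_ind: k => k IH; case: (posnP k) => [-> | kp].
  by exists c; exact: first_hit_here.
case: (first_hit_or_walk pathC kp) => [// | [k' Ek' lift]].
have [r Hr] := IH k' ltac:(lia).
by exists r; apply: lift; rewrite lastC.
Qed.

Lemma first_hit_cycle_periodic d M r : walk_effect c C = (- Z.of_nat d)%Z ->
  (size C < M)%N -> first_hit 0 c M r -> forall i, first_hit 0 c (M + d * i) r.
Proof.
move=> effectC CM H; elim=> [|i IH]; first by rewrite muln0 addn0.
by apply: (first_hit_walk pathC _ _ _ (k' := M + d * i)); rewrite ?lastC //; lia.
Qed.

Lemma first_hit_common_target (S : {set Q}) :
  (forall p q, p \in S -> q \in S -> clos_refl_trans Q (fun p q => edgeC A p q) p q) ->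
  c \in S -> exists r, forall q, q \in S -> exists k, first_hit 0 q k r.
Proof.
move=> Sconn cS; pose M := (size C).+1; pose d := Z.to_nat (- walk_effect c C).
have effectC : walk_effect c C = (- Z.of_nat d)%Z by rewrite /d; lia.
have [r Hr] := first_hit_exists_of_cycle M.
exists r => q qS; have [l pl lq] := clos_refl_trans_path (Sconn q c qS cS).
have := walk_effect_le_size (p := q) (l := l).
exists (Z.to_nat (Z.of_nat (M + d * (2 * size l)) - walk_effect q l)).
apply: (first_hit_walk pl _ _ (k' := M + d * (2 * size l))); [nia | nia |].
by rewrite lq; apply: first_hit_cycle_periodic.
Qed.

End NegativeCycle.
End CounterWalks.

Section Hitting.
Local Open Scope R_scope.
Variables (Q : finType) (A : pVASS2 Q).
Implicit Types (p q r s t : Q).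

Lemma edgeC_W_gt0 p t : edgeC A p t -> (0 < W A p t)%N.
Proof.
by rewrite /edgeC /W; case E: (rule A p t) => [[? w]|] // _; exact: weight_pos E.
Qed.

Lemma edgeC_enabled2 p t k : (0 < k)%N -> edgeC A p t -> enabled2 A p t k.
Proof. by rewrite /edgeC /enabled2; case: (rule A p t) => [[[? ?] ?]|] // ->. Qed.

Lemma edgeC_W_le_Ten2 p t k : (0 < k)%N -> edgeC A p t -> (W A p t <= Ten2 A p k)%N.
Proof. by move=> kp e; rewrite /Ten2 (bigD1 t) //= edgeC_enabled2 // leq_addr. Qed.

Lemma INR_ratio_ge0 (w T : nat) : (0 < T)%N -> 0 <= INR w / INR T.
Proof.
move=> T0; apply/Rmult_le_pos/Rlt_le/Rinv_0_lt_compat/lt_0_INR; last by lia.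
exact: pos_INR.
Qed.

Lemma hit_n_ge0 r n p k : 0 <= hit_n A r n p k.
Proof.
elim: n p k => [|n IH] p k /=.
  by case: (k == 0%N); [case: (p == r) |]; lra.
case: (k == 0%N); first by case: (p == r); lra.
case: (Ten2 A p k =P 0%N) => [_ | T0]; first exact: IH.
apply: rsum_ge0 => t; case: enabled2; last lra.
by apply: Rmult_le_pos (IH _ _); apply: INR_ratio_ge0; lia.
Qed.

Lemma first_hit_hit_n_gt0 p k r : first_hit A 0 p k r -> exists n, 0 < hit_n A r n p k.
Proof.
elim=> [r' | p' k' t r' kp e _ [n IH]].
  by exists 0%N; rewrite /= eqxx; lra.
exists n.+1 => /=.
have Wt := edgeC_W_gt0 e; have WT := edgeC_W_le_Ten2 kp e.
have -> : (k' == 0%N) = false by lia.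
have -> : (Ten2 A p' k' == 0%N) = false by lia.
apply: (rsum_gt0 (t0 := t)) => [x|].
  case: enabled2; last lra.
  by apply: Rmult_le_pos (hit_n_ge0 _ _ _ _); apply: INR_ratio_ge0; lia.
rewrite edgeC_enabled2 //; apply: Rmult_lt_0_compat IH.
by apply: Rdiv_lt_0_compat; apply: lt_0_INR; lia.
Qed.

Lemma G_gt0 q r n : 0 < hit_n A r n q 1 -> 0 < G A q r.
Proof.
move=> hit_pos; rewrite /G; case: completeness => g [ub _] /=.
have : hit_set A q r (Rmin 1 (hit_n A r n q 1)) by exists n.
have : 0 < Rmin 1 (hit_n A r n q 1) by apply: Rmin_glb_lt; lra.
by move=> ? /ub; lra.
Qed.

Variable S : {set Q}.
Hypothesis S_closed : forall p q, p \in S -> edgeC A p q -> q \in S.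

Lemma first_hit_unit_edgeG p k s :
  p \in S -> first_hit A k p k.+1 s -> edgeG A S p s.
Proof.
move=> pS H; have H1 : first_hit A 0 p 1 s.
  by apply: (first_hit_subn (m := k)); rewrite add0n add1n.
split=> //; split; first exact: first_hit_closed S_closed H1 pS.
by have [n hn] := first_hit_hit_n_gt0 H1; exact: G_gt0 hn.
Qed.

Lemma first_hit_edgeG_reach p k r :
  p \in S -> first_hit A 0 p k r -> clos_refl_trans Q (edgeG A S) p r.
Proof.
elim: k p => [|k IH] p pS H.
  by rewrite (first_hit_at_level H) //; exact: rt_refl.
have [|s Hps Hsr] := first_hit_split H (m := k); first lia.
apply: (rt_trans _ _ _ s); first exact/rt_step/(first_hit_unit_edgeG pS Hps).
by apply: IH Hsr; exact: first_hit_closed S_closed Hps pS.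
Qed.

End Hitting.

Lemma Z_min_exists (P : Z -> Prop) (b : Z) :
  (exists z, P z) -> (forall z, P z -> (b <= z)%Z) ->
  exists z, P z /\ forall y, P y -> (z <= y)%Z.
Proof.
move=> [z0 Pz0] lb; apply: NNPP => no_min.
suff notP : forall z, (b <= z)%Z -> ~ P z by exact: notP z0 (lb z0 Pz0) Pz0.
apply: Zlt_lower_bound_ind => z IH bz Pz; apply: no_min; exists z; split=> // y Py.
by case: (Z.le_gt_cases z y) => // yz; case: (IH y (conj (lb y Py) yz)).
Qed.

Section Trend.
Local Open Scope R_scope.
Variables (Q : finType) (A : pVASS2 Q).
Implicit Types (s t : Q).

Lemma PC_ge0 s t : 0 <= PC A s t.
Proof.
rewrite /PC; case: eqP => T0; first by case: (s == t); lra.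
by apply: INR_ratio_ge0; lia.
Qed.

Lemma PC_row_sum s : rsum (PC A s) = 1.
Proof.
rewrite rsumE /PC; case: eqP => [_ | T0].
  by rewrite (bigD1 s) //= eqxx big1 => [|t /negPf ts]; rewrite ?(eq_sym s) ?ts; lra.
by rewrite -big_distrl -INR_sum -/(Tot A s); exact: Rinv_r (not_0_INR _ T0).
Qed.

Lemma invariant_dist_drift (S : {set Q}) mu (f : Q -> R) : invariant_dist A S mu ->
  rsum (fun s => mu s * rsum (fun t => (f t - f s) * PC A s t)) = 0.
Proof.
move=> [_ _ _ mu_inv].
have row s : rsum (fun t => (f t - f s) * PC A s t)
           = rsum (fun t => PC A s t * f t) + (-1) * f s.
  rewrite -{2}(Rmult_1_r (f s)) -(PC_row_sum s) -rsumZ -rsumZ -rsumD.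
  by apply: eq_rsum => t; ring.
rewrite (eq_rsum (G := fun s =>
  rsum (fun t => mu s * PC A s t * f t) + (-1) * (mu s * f s))).
  rewrite rsumD rsumZ rsum_exchange.
  rewrite (eq_rsum (F := fun t => rsum _) (G := fun t => mu t * f t)); first ring.
  by move=> t; rewrite mu_inv -(Rmult_comm (f t)) -rsumZ; apply: eq_rsum => s; ring.
move=> s; rewrite row Rmult_plus_distr_l -rsumZ.
by congr (_ + _); [apply: eq_rsum => t |]; ring.
Qed.

Lemma potential_step_le (phi : Q -> Z) s t :
  (edgeC A s t -> (phi t <= phi s + kappa2 A s t)%Z) ->
  (IZR (phi t) - IZR (phi s)) * PC A s t <= IZR (kappa2 A s t) * PC A s t.
Proof.
case: (boolP (edgeC A s t)) => [_ /(_ isT) pot | + _].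
  apply: Rmult_le_compat_r (PC_ge0 s t) _.
  by rewrite -minus_IZR; apply: IZR_le; lia.
rewrite /edgeC /kappa2 /PC /W; case: (rule A s t) => // _.
case: (Tot A s =P 0%N) => _; last by rewrite Rdiv_0_l; lra.
by case: (s =P t) => [<- | _]; lra.
Qed.

Lemma trend2_ge0_of_potential (S : {set Q}) mu (phi : Q -> Z) :
  invariant_dist A S mu ->
  (forall s t, s \in S -> edgeC A s t -> (phi t <= phi s + kappa2 A s t)%Z) ->
  0 <= trend2 A mu.
Proof.
move=> Hmu pot; have [mu0 muS _ _] := Hmu.
rewrite -(invariant_dist_drift (fun q => IZR (phi q)) Hmu) /trend2.
apply: rsum_le => s; case: (boolP (s \in S)) => sS; last by rewrite muS //; lra.
apply: Rmult_le_compat_l (mu0 s) _; apply: rsum_le => t.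
by apply: potential_step_le; apply: pot.
Qed.

(* The minimal effect of a walk from c is a potential as soon as no cycle
   through c has negative effect. *)
Lemma potential_of_nonneg_cycles (S : {set Q}) c :
  bscc_C A S -> c \in S ->
  (forall l, path (edgeC A) c l -> last c l = c -> (0 <= walk_effect A c l)%Z) ->
  exists phi : Q -> Z,
    forall s t, s \in S -> edgeC A s t -> (phi t <= phi s + kappa2 A s t)%Z.
Proof.
move=> [_ _ Sconn Scl] cS cyc_ge0.
pose walk_to p z := exists l, [/\ path (edgeC A) c l, last c l = p & walk_effect A c l = z].
have min_walk p : exists z, p \in S -> walk_to p z /\ forall y, walk_to p y -> (z <= y)%Z.
  case: (boolP (p \in S)) => pS; last by exists 0%Z.
  have [l pl lp] := clos_refl_trans_path (Sconn c p cS pS).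
  have [l' pl' lc] := clos_refl_trans_path (Sconn p c pS cS).
  have [|z|z zmin] := Z_min_exists (P := walk_to p) (b := (- walk_effect A p l')%Z).
  - by exists (walk_effect A c l), l.
  - move=> [l1 [pl1 lp1 <-]]; have := cyc_ge0 (l1 ++ l').
    by rewrite cat_path last_cat walk_effect_cat lp1 pl1 pl' lc => /(_ isT erefl); lia.
  - by exists z.
have [phi Hphi] := functional_choice _ min_walk.
exists phi => s t sS e.
have [[l [pl ls <-]] _] := Hphi s sS; have [_ tmin] := Hphi t (Scl s t sS e).
suff /tmin : walk_to t (walk_effect A c (rcons l t)).
  by rewrite -cats1 walk_effect_cat ls /=; lia.
by exists (rcons l t); split; rewrite ?rcons_path ?last_rcons ?pl ?ls.
Qed.

Lemma negative_cycle_of_trend (S : {set Q}) mu c :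
  bscc_C A S -> invariant_dist A S mu -> trend2 A mu < 0 -> c \in S ->
  exists l, [/\ path (edgeC A) c l, last c l = c & (walk_effect A c l < 0)%Z].
Proof.
move=> HS Hmu Htr cS; apply: NNPP => no_neg.
have cyc_ge0 l : path (edgeC A) c l -> last c l = c -> (0 <= walk_effect A c l)%Z.
  by move=> pl lc; apply/Z.nlt_ge => neg; apply: no_neg; exists l.
have [phi pot] := potential_of_nonneg_cycles HS cS cyc_ge0.
by have := trend2_ge0_of_potential Hmu pot; lra.
Qed.

End Trend.

Lemma unique_bscc_of_sink (T : finType) (V : {set T}) (E : T -> T -> Prop) (r : T) :
  V != set0 -> (forall p q, E p q -> q \in V) ->
  (forall q, q \in V -> clos_refl_trans T E q r) ->
  exists! B : {set T}, is_bscc V E B.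
Proof.
move=> Vne EV to_r.
have [v vV] := set0Pn _ Vne.
have rV : r \in V.
  by apply: (clos_refl_trans_closed (P := fun x => x \in V)) (to_r v vV) vV => p q _ /EV.
pose B := [set x | if excluded_middle_informative (clos_refl_trans T E r x)
                    then true else false].
have inB x : x \in B <-> clos_refl_trans T E r x.
  by rewrite inE; case: excluded_middle_informative.
have BV x : x \in B -> x \in V.
  move=> /inB r_x.
  by apply: (clos_refl_trans_closed (P := fun x => x \in V)) r_x rV => p q _ /EV.
exists B; split.
  split.
  - by apply/set0Pn; exists r; apply/inB/rt_refl.
  - by apply/subsetP => x /BV.
  - by move=> p q pB /inB r_q; apply: rt_trans (to_r p (BV p pB)) r_q.
  - by move=> p q /inB r_p pq; apply/inB/(rt_trans _ _ _ _ _ r_p)/rt_step.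
move=> B' [B'ne B'V B'conn B'cl].
have [x xB'] := set0Pn _ B'ne.
have rB' : r \in B'.
  have x_r := to_r x (subsetP B'V x xB').
  exact: (clos_refl_trans_closed (P := fun x => x \in B')) x_r xB'.
apply/setP => y; apply/idP/idP => [/inB r_y | yB'].
  exact: (clos_refl_trans_closed (P := fun x => x \in B')) r_y rB'.
exact/inB/B'conn.
Qed.

Theorem mainTheorem20 (Q : finType) (A : pVASS2 Q) (S : {set Q}) (mu : Q -> R) :
  bscc_C A S ->
  invariant_dist A S mu ->
  Rlt (trend2 A mu) R0 ->
  exists! B : {set Q}, is_bscc S (edgeG A S) B.
Proof.
move=> HS Hmu Htr; have [Sne _ Sconn Scl] := HS.
have [c cS] := set0Pn _ Sne.
have [C [pathC lastC negC]] := negative_cycle_of_trend HS Hmu Htr cS.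
have [r to_r] := first_hit_common_target pathC lastC negC Sconn cS.
apply: (unique_bscc_of_sink (r := r) Sne) => [p q [_ []] // | q qS].
have [k Hk] := to_r q qS.
exact: (first_hit_edgeG_reach Scl qS Hk).
Qed.
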